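(* Let $n,m\ge 1$, $T>0$, $X_0\in\mathbb{R}^n$, and let $A\in\mathbb{R}^{n\times n}$ have only real eigenvalues. Let $\mathcal{U}\subset\mathbb{R}^m$ be a compact convex polytope with $0\in\mathcal{U}$, given as the convex hull of finitely many vertices $u_1,\dots,u_N\in\mathbb{R}^m$. Let $\mathcal{B}\subset\mathbb{R}^{n\times m}$ be compact. Let $d\in\mathbb{R}^n$ with $\|d\|=1$ be an eigenvector of $A^\top$ (with real eigenvalue). Define $P_0 := e^{A^\top T} d$. For each $i\in\{1,\dots,N\}$ choose $$B_i \in \arg\max_{B\in\mathcal{B}} P_0^\top B u_i,$$ and choose $$i^\ast \in \arg\max_{1\le i\le N} P_0^\top B_i u_i .$$ Then $B^\ast := B_{i^\ast}$ satisfies $B^\ast\in\arg\max_{B\in\mathcal{B}} G_d(B)$, where $G_d$ is the directional growth metric defined in the context.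
   Context: For a fixed $B\in\mathcal{B}$ consider the linear control system $\dot X(t)=AX(t)+Bu(t)$, $X(0)=X_0$, $t\in[0,T]$, with measurable controls $u(t)\in\mathcal{U}$. The co-state with terminal condition $P(T)=d$ is $P(t)=e^{A^\top (T-t)}d$, i.e. the solution of $\dot P(t)=-A^\top P(t)$, $P(T)=d$. Let $u_B^\ast(\cdot)$ be any admissible control satisfying $u_B^\ast(t)\in\arg\max_{u\in\mathcal{U}} P(t)^\top B u$ for all $t\in[0,T]$ (the Pontryagin maximum-principle control for the boundary trajectory with terminal co-state $d$), and let $X_{d,B}:=X(T)$ denote the terminal state of the trajectory driven by $u_B^\ast$. Let $c_0:=e^{AT}X_0$ be the endpoint at time $T$ of the zero-input trajectory ($u\equiv 0$). The directional growth metric is $$G_d(B):= d^\top\big(X_{d,B}-c_0\big).$$ *)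

From HB Require Import structures.
From mathcomp Require Import all_boot all_order all_algebra.
From mathcomp Require Import all_classical all_reals all_analysis.
Set Implicit Arguments. Unset Strict Implicit. Unset Printing Implicit Defensive.
Import Order.TTheory GRing.Theory Num.Theory.
Import numFieldNormedType.Exports.
Local Open Scope classical_set_scope.
Local Open Scope ring_scope.

Section Defs.
Variable R : realType.

Definition mxpow (n : nat) (A : 'M[R]_n) (k : nat) : 'M[R]_n :=
  iter k (mulmx A) 1%:M.

Definition expmx (n : nat) (A : 'M[R]_n) (t : R) : 'M[R]_n :=
  \matrix_(i, j) limn (fun N : nat =>
      \sum_(k < N) (t ^+ k / (k`!)%:R) * mxpow A k i j).

Definition bilin (n m : nat) (p : 'cV[R]_n) (M : 'M[R]_(n, m)) (v : 'cV[R]_m) : R :=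
  (p^T *m M *m v) 0 0.

Definition conv_hull (m N : nat) (vtx : 'I_N -> 'cV[R]_m) : set 'cV[R]_m :=
  [set u | exists w : 'I_N -> R,
     (forall i, 0 <= w i) /\ \sum_(i < N) w i = 1 /\ u = \sum_(i < N) w i *: vtx i].

Definition tint (T : R) : set R := `[0, T]%classic.

Definition admissible (m : nat) (U : set 'cV[R]_m) (T : R) (u : R -> 'cV[R]_m) : Prop :=
  (forall i, measurable_fun (tint T) (fun t => u t i 0)) /\
  (forall t, tint T t -> U (u t)).

Definition costate (n : nat) (A : 'M[R]_n) (T : R) (d : 'cV[R]_n) (t : R) : 'cV[R]_n :=
  expmx A^T (T - t) *m d.

Definition pmp_control (n m : nat) (A : 'M[R]_n) (B : 'M[R]_(n, m)) (U : set 'cV[R]_m)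
    (T : R) (d : 'cV[R]_n) (u : R -> 'cV[R]_m) : Prop :=
  admissible U T u /\
  forall t, tint T t -> U (u t) /\
    forall v, U v -> bilin (costate A T d t) B v <= bilin (costate A T d t) B (u t).

(* terminal state X(T) of  X' = A X + B u, X(0) = X0  (variation of constants) *)
Definition terminal_state (n m : nat) (A : 'M[R]_n) (B : 'M[R]_(n, m)) (X0 : 'cV[R]_n)
    (T : R) (u : R -> 'cV[R]_m) : 'cV[R]_n :=
  expmx A T *m X0 +
  \col_(i < n) Rintegral lebesgue_measure (tint T)
      (fun s => (expmx A (T - s) *m B *m u s) i 0).

(* directional growth metric  G_d(B) = d^T (X_{d,B} - c_0), computed for the
   given maximum-principle control u *)
Definition growth (n m : nat) (A : 'M[R]_n) (B : 'M[R]_(n, m)) (X0 : 'cV[R]_n)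
    (T : R) (d : 'cV[R]_n) (u : R -> 'cV[R]_m) : R :=
  (d^T *m (terminal_state A B X0 T u - expmx A T *m X0)) 0 0.

End Defs.

From HB Require Import structures.
From mathcomp Require Import all_boot all_order all_algebra.
From mathcomp Require Import all_classical all_reals all_analysis.
From mathcomp Require Import measurable_realfun.
Import Order.TTheory GRing.Theory Num.Theory.
Import numFieldNormedType.Exports.
Local Open Scope classical_set_scope.
Local Open Scope ring_scope.

(* Since d is an eigenvector of A^T with eigenvalue lam, the co-state is
   P(t) = e^{lam (T - t)} d, a positive multiple of d.  By variation of
   constants G_d(B) = \int_0^T P(s)^T B u(s) ds, so after dividing by the
   positive factor the integrand is d^T B u(s) with u(s) in the polytope U.
   A linear functional on U is maximal at a vertex, hence
   d^T B u(s) <= max_i d^T B u_i <= d^T B* u_{i*} <= d^T B* u*(s), the last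
   step by the maximum condition for the control u* of B*; integrate. *)

Section BoundedMeasurable.
Context {dX : measure_display} {X : measurableType dX} {R : realType}.
Variable D : set X.

Definition bdd_measurable (f : X -> R) : Prop :=
  measurable_fun D f /\ exists M, forall x, D x -> `|f x| <= M.

Lemma bdd_measurable_cst c : bdd_measurable (fun=> c).
Proof. by split; [exact: measurable_cst | exists `|c|]. Qed.

Lemma bdd_measurableD f g :
  bdd_measurable f -> bdd_measurable g -> bdd_measurable (fun x => f x + g x).
Proof.
move=> [mf [M1 bf]] [mg [M2 bg]]; split; first exact: measurable_funD.
exists (M1 + M2) => x Dx; apply: le_trans (ler_normD _ _) _.
by apply: lerD; [exact: bf | exact: bg].
Qed.

Lemma bdd_measurableM f g :
  bdd_measurable f -> bdd_measurable g -> bdd_measurable (fun x => f x * g x).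
Proof.
move=> [mf [M1 bf]] [mg [M2 bg]]; split; first exact: measurable_funM.
exists (M1 * M2) => x Dx; rewrite normrM.
by apply: ler_pM => //; [exact: bf | exact: bg].
Qed.

Lemma bdd_measurable_sum (I : Type) (r : seq I) (P : pred I) (F : I -> X -> R) :
  (forall i, P i -> bdd_measurable (F i)) ->
  bdd_measurable (fun x => \sum_(i <- r | P i) F i x).
Proof.
move=> bF; rewrite -fct_sumE; apply: big_ind => //.
- exact: bdd_measurable_cst.
- exact: bdd_measurableD.
Qed.

Variable mu : {measure set X -> \bar R}.

Lemma bdd_measurable_integrable f : measurable D -> (mu D < +oo)%E ->
  bdd_measurable f -> mu.-integrable D (EFin \o f).
Proof.
move=> mD muD [mf [M bf]]; apply: measurable_bounded_integrable => //.
exists M; split; first exact: num_real.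
by move=> y My x Dx; apply: le_trans (bf x Dx) _; exact: ltW.
Qed.

Lemma Rintegral_sum (I : Type) (r : seq I) (P : pred I) (F : I -> X -> R) :
  measurable D -> (forall i, P i -> mu.-integrable D (EFin \o F i)) ->
  \int[mu]_(x in D) (\sum_(i <- r | P i) F i x) =
  \sum_(i <- r | P i) \int[mu]_(x in D) F i x.
Proof.
move=> mD intF; elim: r => [|i r IH].
  under eq_Rintegral do rewrite big_nil.
  by rewrite big_nil Rintegral_cst // mul0r.
under eq_Rintegral do rewrite big_cons.
rewrite big_cons; case: ifPn => Pi; last by rewrite -IH.
rewrite RintegralD ?IH //; first exact: intF.
have -> : EFin \o (fun x => \sum_(j <- r | P j) F j x) =
          (fun x => \sum_(j <- r | P j) (EFin \o F j) x).
  by apply/funext => x; rewrite /= sumEFin.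
exact: integrable_sum.
Qed.

End BoundedMeasurable.

Section MatrixExponential.
Context {R : realType} {n : nat}.
Implicit Types (A : 'M[R]_n) (v : 'cV[R]_n) (t c lam : R).

Lemma mxpowSr A k : mxpow A k.+1 = mxpow A k *m A.
Proof.
elim: k => [|k IH]; first by rewrite /mxpow /= mulmx1 mul1mx.
change (A *m mxpow A k.+1 = mxpow A k.+1 *m A).
by rewrite {1}IH mulmxA.
Qed.

Lemma mxpow_trmx A k : mxpow A^T k = (mxpow A k)^T.
Proof.
elim: k => [|k IH]; first by rewrite /mxpow /= trmx1.
change (A^T *m mxpow A^T k = (mxpow A k.+1)^T).
by rewrite mxpowSr IH trmx_mul.
Qed.

Lemma mxpow_eigen {A v lam} k :
  A *m v = lam *: v -> mxpow A k *m v = lam ^+ k *: v.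
Proof.
move=> Av; elim: k => [|k IH]; first by rewrite /mxpow /= mul1mx scale1r.
change (A *m mxpow A k *m v = lam ^+ k.+1 *: v).
by rewrite -mulmxA IH -scalemxAr Av scalerA exprS mulrC.
Qed.

Lemma expmx_trmx A t : expmx A^T t = (expmx A t)^T.
Proof.
apply/matrixP => i j; rewrite !mxE; congr (limn _); apply/funext => N.
by apply: eq_bigr => k _; rewrite mxpow_trmx mxE.
Qed.

Definition mxpow_rate A : R := 1 + \sum_i \sum_j `|A i j|.

Lemma mxpow_rate_ge1 A : 1 <= mxpow_rate A.
Proof. by rewrite lerDl sumr_ge0 // => i _; rewrite sumr_ge0. Qed.

Lemma mxpow_bound A k i j : `|mxpow A k i j| <= mxpow_rate A ^+ k.
Proof.
elim: k i j => [|k IH] i j.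
  by rewrite /mxpow /= mxE expr0; case: (i == j); rewrite ?normr1 ?normr0.
change (`|(A *m mxpow A k) i j| <= mxpow_rate A ^+ k.+1); rewrite mxE.
apply: le_trans (ler_norm_sum _ _ _) _.
apply: (@le_trans _ _ (\sum_l `|A i l| * mxpow_rate A ^+ k)).
  by apply: ler_sum => l _; rewrite normrM ler_wpM2l.
rewrite -mulr_suml exprS ler_wpM2r ?exprn_ge0 //.
  exact: le_trans (mxpow_rate_ge1 A).
rewrite /mxpow_rate [X in _ <= 1 + X](bigD1 i) //= addrCA lerDl.
by rewrite addr_ge0 // sumr_ge0 // => l _; rewrite sumr_ge0.
Qed.

Definition expmx_partial A t N : 'M[R]_n :=
  \sum_(k < N) (t ^+ k / (k`!)%:R) *: mxpow A k.

Lemma expmx_partialE A t N i j :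
  expmx_partial A t N i j = series (fun k => t ^+ k / (k`!)%:R * mxpow A k i j) N.
Proof.
by rewrite /series /= big_mkord summxE; apply: eq_bigr => k _; rewrite mxE.
Qed.

Lemma expmx_term_bound A t c i j k : `|t| <= c ->
  `|t ^+ k / (k`!)%:R * mxpow A k i j| <= exp_coeff (c * mxpow_rate A) k.
Proof.
move=> tc; rewrite /exp_coeff /= normrM exprMn mulrAC.
apply: ler_pM => //; last exact: mxpow_bound.
rewrite normrM normfV normrX [`|_%:R|]ger0_norm // ler_wpM2r //.
by apply: lerXn2r; rewrite ?nnegrE //; exact: le_trans tc.
Qed.

Lemma exp_coeff_rate_ge0 A c k : 0 <= c ->
  0 <= exp_coeff (c * mxpow_rate A) k.
Proof.
by move=> c0; apply/exp_coeff_ge0/mulr_ge0 => //; exact: le_trans (mxpow_rate_ge1 A).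
Qed.

Lemma expmx_limE A t i j :
  expmx A t i j = limn (fun N => expmx_partial A t N i j).
Proof.
rewrite mxE; congr (limn _); apply/funext => N.
by rewrite summxE; apply: eq_bigr => k _; rewrite mxE.
Qed.

Lemma cvg_expmx_partial A t i j :
  (fun N => expmx_partial A t N i j) @ \oo --> expmx A t i j.
Proof.
rewrite expmx_limE; have -> : (fun N => expmx_partial A t N i j) =
          series (fun k => t ^+ k / (k`!)%:R * mxpow A k i j).
  by apply/funext => N; exact: expmx_partialE.
apply: normed_cvg.
apply: (series_le_cvg (v_ := exp_coeff (`|t| * mxpow_rate A))).
- by move=> k; rewrite /= normr_ge0.
- by move=> k; exact: exp_coeff_rate_ge0.
- by move=> k; exact: expmx_term_bound.
- exact: is_cvg_series_exp_coeff.
Qed.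

Lemma expmx_bound A t c i j : `|t| <= c ->
  `|expmx A t i j| <= expR (c * mxpow_rate A).
Proof.
move=> tc; have c0 : 0 <= c by exact: le_trans tc.
have cvg_norm_partial :
    (fun N => `|expmx_partial A t N i j|) @ \oo --> `|expmx A t i j|.
  by apply: cvg_norm; exact: cvg_expmx_partial.
rewrite -(cvg_lim (@Rhausdorff R) cvg_norm_partial).
apply: limr_le; first by apply/cvg_ex; eexists; exact: cvg_norm_partial.
apply: nearW => N; rewrite expmx_partialE.
apply: le_trans (ler_norm_sum _ _ _) _.
apply: (@le_trans _ _ (series (exp_coeff (c * mxpow_rate A)) N)).
  by rewrite /series /=; apply: ler_sum => k _; exact: expmx_term_bound.
apply: nondecreasing_cvgn_le; last exact: is_cvg_series_exp_coeff.
by apply: nondecreasing_series => k _ _; exact: exp_coeff_rate_ge0.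
Qed.

Lemma expmx_partial_eigen {A v lam} t N :
  A *m v = lam *: v ->
  expmx_partial A t N *m v = series (exp_coeff (t * lam)) N *: v.
Proof.
move=> Av; rewrite /expmx_partial mulmx_suml /series /= big_mkord scaler_suml.
apply: eq_bigr => k _.
by rewrite -scalemxAl (mxpow_eigen _ Av) scalerA /exp_coeff /= exprMn mulrAC.
Qed.

Lemma expmx_eigen {A v lam} t :
  A *m v = lam *: v -> expmx A t *m v = expR (t * lam) *: v.
Proof.
move=> Av; apply/matrixP => i k.
have cvg_lhs : (fun N => (expmx_partial A t N *m v) i k) @ \oo --> (expmx A t *m v) i k.
  under eq_fun do rewrite mxE; rewrite mxE.
  apply: cvg_big => //; first exact: add_continuous.
  by move=> j _; apply: cvgM => //; [exact: cvg_expmx_partial | exact: cvg_cst].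
have cvg_rhs : (fun N => (expmx_partial A t N *m v) i k) @ \oo --> expR (t * lam) * v i k.
  under eq_fun do rewrite (expmx_partial_eigen _ _ Av) mxE.
  by apply: cvgM => //; [exact: is_cvg_series_exp_coeff | exact: cvg_cst].
by rewrite [RHS]mxE -(cvg_lim (@Rhausdorff R) cvg_lhs) (cvg_lim (@Rhausdorff R) cvg_rhs).
Qed.

Lemma measurable_expmx A i j :
  measurable_fun setT (fun t => expmx A t i j).
Proof.
apply: (measurable_fun_cvg (h := fun N t => expmx_partial A t N i j)); last first.
  by move=> t _; exact: cvg_expmx_partial.
move=> N; under eq_fun do rewrite expmx_partialE /series /=.
apply: measurable_sum => k; apply: measurable_funM; last exact: measurable_cst.
by apply: measurable_funM; [exact/measurable_funX | exact: measurable_cst].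
Qed.

End MatrixExponential.

Section ControlSystem.
Context {R : realType} {n m : nat}.
Implicit Types (A : 'M[R]_n) (B : 'M[R]_(n, m)) (d : 'cV[R]_n) (T : R).

Lemma measurable_tint T : measurable (tint T).
Proof. exact: measurable_itv. Qed.

Lemma integrable_tint T (f : R -> R) : bdd_measurable (tint T) f ->
  lebesgue_measure.-integrable (tint T) (EFin \o f).
Proof.
(* [tint T] is typed with the default measurable structure on [R]; that of
   [lebesgue_measure] is only convertible to it, hence the explicit [X] and
   the [lexx] step below. *)
move=> bf; apply: (bdd_measurable_integrable (X := measurableTypeR R)) bf.
  exact: measurable_tint.
apply: (@le_lt_trans _ _ (lebesgue_measure [set` `[0, T]])); first exact: lexx.
by rewrite lebesgue_measure_itv; case: ifP => _; rewrite ?ltry.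
Qed.

Lemma bdd_measurable_expmx A T i j :
  bdd_measurable (tint T) (fun s => expmx A (T - s) i j).
Proof.
split.
  apply: (measurableT_comp (measurable_expmx A i j)).
  by apply: measurable_funB; [exact: measurable_cst | exact: measurable_id].
exists (expR (T * mxpow_rate A)) => s; rewrite /tint /= in_itv /= => /andP[s0 sT].
by apply: expmx_bound; rewrite ger0_norm ?subr_ge0 // lerBlDr lerDl.
Qed.

Lemma bdd_measurable_flow A B T (u : R -> 'cV[R]_m) i :
  (forall j, bdd_measurable (tint T) (fun s => u s j 0)) ->
  bdd_measurable (tint T) (fun s => (expmx A (T - s) *m B *m u s) i 0).
Proof.
move=> bu; under eq_fun do rewrite mxE.
apply: bdd_measurable_sum => j _; under eq_fun do rewrite mxE.
apply: bdd_measurableM (bu j); apply: bdd_measurable_sum => l _.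
exact/bdd_measurableM/bdd_measurable_cst/bdd_measurable_expmx.
Qed.

Lemma bilin_costate A B T d s v : bilin (costate A T d s) B v =
  \sum_i d i 0 * (expmx A (T - s) *m B *m v) i 0.
Proof.
rewrite /bilin /costate expmx_trmx trmx_mul trmxK -!mulmxA mxE.
by apply: eq_bigr => i _; rewrite mxE !mulmxA.
Qed.

Lemma bdd_measurable_hamiltonian A B T d (u : R -> 'cV[R]_m) :
  (forall j, bdd_measurable (tint T) (fun s => u s j 0)) ->
  bdd_measurable (tint T) (fun s => bilin (costate A T d s) B (u s)).
Proof.
move=> bu; under eq_fun do rewrite bilin_costate.
apply: bdd_measurable_sum => i _.
exact/bdd_measurableM/bdd_measurable_flow/bu/bdd_measurable_cst.
Qed.

Lemma growthE A B X0 T d (u : R -> 'cV[R]_m) :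
  (forall j, bdd_measurable (tint T) (fun s => u s j 0)) ->
  growth A B X0 T d u =
  \int[lebesgue_measure]_(s in tint T) bilin (costate A T d s) B (u s).
Proof.
move=> bu; rewrite /growth /terminal_state addrC addKr mxE.
under [RHS]eq_Rintegral do rewrite bilin_costate.
rewrite Rintegral_sum; first last.
- move=> i _; apply/integrable_tint/bdd_measurableM/bdd_measurable_flow => //.
  exact: bdd_measurable_cst.
- exact: measurable_tint.
apply: eq_bigr => i _; rewrite !mxE RintegralZl //; first exact: measurable_tint.
exact/integrable_tint/bdd_measurable_flow.
Qed.

Lemma costate_eigen {A d} {lam : R} : A^T *m d = lam *: d ->
  forall T t, costate A T d t = expR ((T - t) * lam) *: d.
Proof. by move=> Ad T t; exact: expmx_eigen. Qed.

Lemma bilinZl d a B v : bilin (a *: d) B v = a * bilin d B v.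
Proof. by rewrite /bilin linearZ /= -!scalemxAl mxE. Qed.

Lemma bilin_sumr d B N (w : 'I_N -> R) (vtx : 'I_N -> 'cV[R]_m) :
  bilin d B (\sum_i w i *: vtx i) = \sum_i w i * bilin d B (vtx i).
Proof.
by rewrite /bilin mulmx_sumr summxE; apply: eq_bigr => i _; rewrite -scalemxAr mxE.
Qed.

End ControlSystem.

Section ConvexHull.
Context {R : realType} {m N : nat} {vtx : 'I_N -> 'cV[R]_m}.

Lemma conv_hull_vertex i : conv_hull vtx (vtx i).
Proof.
exists (fun j => (j == i)%:R); split; first by move=> j; case: (j == i).
split; rewrite (bigD1 i) //= eqxx.
  by rewrite big1 ?addr0 // => j /negbTE ->.
by rewrite scale1r big1 ?addr0 // => j /negbTE ->; rewrite scale0r.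
Qed.

Lemma conv_hull_coord_bound u k :
  conv_hull vtx u -> `|u k 0| <= \sum_i `|vtx i k 0|.
Proof.
case=> w [w0 [w1 ->]]; rewrite summxE; apply: le_trans (ler_norm_sum _ _ _) _.
apply: (@le_trans _ _ (\sum_i w i * \sum_j `|vtx j k 0|)); last first.
  by rewrite -mulr_suml w1 mul1r.
apply: ler_sum => i _; rewrite mxE normrM ger0_norm // ler_wpM2l //.
by rewrite (bigD1 i) //= lerDl sumr_ge0.
Qed.

Lemma bilin_conv_hull_le {n} {p : 'cV[R]_n} {B : 'M[R]_(n, m)} {c : R} {u} :
  (forall i, bilin p B (vtx i) <= c) -> conv_hull vtx u -> bilin p B u <= c.
Proof.
move=> le_c [w [w0 [w1 ->]]]; rewrite bilin_sumr.
apply: (@le_trans _ _ (\sum_i w i * c)); last by rewrite -mulr_suml w1 mul1r.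
by apply: ler_sum => i _; rewrite ler_wpM2l.
Qed.

Lemma admissible_bdd_measurable {T : R} {u : R -> 'cV[R]_m} :
  admissible (conv_hull vtx) T u -> forall j, bdd_measurable (tint T) (fun s => u s j 0).
Proof.
move=> [mu uU] j; split; first exact: mu.
by exists (\sum_i `|vtx i j 0|) => s Ts; exact: conv_hull_coord_bound _ j (uU s Ts).
Qed.

End ConvexHull.

Theorem theorem1 (R : realType) (n m N : nat) (T : R) (X0 : 'cV[R]_n)
    (A : 'M[R]_n) (vtx : 'I_N -> 'cV[R]_m) (Bset : set 'M[R]_(n, m))
    (d : 'cV[R]_n) (Bi : 'I_N -> 'M[R]_(n, m)) (istar : 'I_N) :
  (0 < n)%N -> (0 < m)%N -> 0 < T ->
  (* A has only real eigenvalues: its characteristic polynomial splits over R *)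
  (exists s : seq R, char_poly A = \prod_(a <- s) ('X - a%:P)) ->
  conv_hull vtx 0 ->
  compact Bset ->
  \sum_(i < n) d i 0 ^+ 2 = 1 ->
  (exists lam : R, A^T *m d = lam *: d) ->
  let P0 := expmx A^T T *m d in
  (forall i, Bset (Bi i) /\
     forall B, Bset B -> bilin P0 B (vtx i) <= bilin P0 (Bi i) (vtx i)) ->
  (forall i, bilin P0 (Bi i) (vtx i) <= bilin P0 (Bi istar) (vtx istar)) ->
  Bset (Bi istar) /\
  forall B, Bset B ->
  forall uB uS : R -> 'cV[R]_m,
    pmp_control A B (conv_hull vtx) T d uB ->
    pmp_control A (Bi istar) (conv_hull vtx) T d uS ->
    growth A B X0 T d uB <= growth A (Bi istar) X0 T d uS.
Proof.
move=> _ _ _ _ _ _ _ [lam Ad] P0 maxBi maxistar.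
split; first exact: (maxBi istar).1.
move=> B BB uB uS [admB maxuB] [admS maxuS].
have vertex_le i : bilin d B (vtx i) <= bilin d (Bi istar) (vtx istar).
  have := le_trans ((maxBi i).2 B BB) (maxistar i).
  by rewrite /P0 (expmx_eigen T Ad) !bilinZl ler_pM2l ?expR_gt0.
have bdd_uB := admissible_bdd_measurable admB.
have bdd_uS := admissible_bdd_measurable admS.
rewrite (growthE _ _ _ _ _ _ bdd_uB) (growthE _ _ _ _ _ _ bdd_uS).
apply: le_Rintegral; first exact: measurable_tint.
- exact/integrable_tint/bdd_measurable_hamiltonian.
- exact/integrable_tint/bdd_measurable_hamiltonian.
move=> s Ts; rewrite !(costate_eigen Ad) !bilinZl ler_pM2l ?expR_gt0 //.
apply: le_trans (bilin_conv_hull_le vertex_le (maxuB s Ts).1) _.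
have := (maxuS s Ts).2 _ (conv_hull_vertex istar).
by rewrite (costate_eigen Ad) !bilinZl ler_pM2l ?expR_gt0.
Qed.
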